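(* For all $0\le\lambda<1$ and $0\le d<1$ there is a number $f(\lambda,d)<1$, depending only on $\lambda$ and $d$, with the following property. Let $H$ be a finite-dimensional complex Hilbert space, $U:H\to H$ unitary and $A:H\to H$ Hermitian such that $1$ is an eigenvalue of $A$ and every other eigenvalue $\mu$ of $A$ satisfies $|\mu|\le\lambda$. Let $A_{\max}$ be the eigenspace of $A$ for the eigenvalue $1$ and $P_{\max}$ the orthogonal projection onto $A_{\max}$, and assume $\|P_{\max}Uv\|\le d\|v\|$ for all $v\in A_{\max}$. Then the spectral radius of $UA$ is at most $f(\lambda,d)$. *)

From mathcomp Require Import all_boot all_order all_algebra.
From mathcomp Require Import complex reals.
Set Implicit Arguments. Unset Strict Implicit. Unset Printing Implicit Defensive.
Import Order.TTheory GRing.Theory Num.Theory.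
Local Open Scope ring_scope.
Local Open Scope complex_scope.

(* H = C^n with C = R[i] (complex numbers over a real field R : realType),
   standard inner product; vectors are column vectors 'cV_n and an operator
   M acts by v |-> M *m v. *)

Section Defs.
Variable R : realType.

Definition adjmx m n (M : 'M[R[i]]_(m, n)) : 'M[R[i]]_(n, m) :=
  (map_mx Num.conj M)^T.
Definition unitary_op n (U : 'M[R[i]]_n) : Prop := U *m adjmx U = 1%:M.
Definition hermitian_op n (A : 'M[R[i]]_n) : Prop := adjmx A = A.

Definition vnorm n (v : 'cV[R[i]]_n) : R[i] := sqrtC (\sum_i `|v i 0| ^+ 2).

Definition is_eigenvalue n (M : 'M[R[i]]_n) (mu : R[i]) : Prop :=
  exists2 v : 'cV[R[i]]_n, v != 0 & M *m v = mu *: v.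

Definition eigenspace_pred n (M : 'M[R[i]]_n) (mu : R[i]) (v : 'cV[R[i]]_n) : Prop :=
  M *m v = mu *: v.

Definition orth_proj_onto n (P : 'M[R[i]]_n) (S : 'cV[R[i]]_n -> Prop) : Prop :=
  [/\ hermitian_op P, P *m P = P & forall v, S v <-> P *m v = v].

(* the eigenvalues of M with multiplicity: the roots of its characteristic
   polynomial *)
Definition eigen_roots n (M : 'M[R[i]]_n) : seq R[i] :=
  sval (closed_field_poly_normal (char_poly M)).

(* spectral radius = max |a| over eigenvalues a (0 for n = 0) *)
Definition spectral_radius n (M : 'M[R[i]]_n) : R[i] :=
  \big[Num.max/0]_(a <- eigen_roots M) `|a|.

End Defs.

(* Let [U A w = z w] with [w != 0], and split [w = x + y] where [x = P w] lies
   in the top eigenspace of [A] and [y] is orthogonal to it.  As [U] is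
   unitary, [|z|^2 (|x|^2 + |y|^2) = |A w|^2 <= |x|^2 + lam^2 |y|^2].
   Projecting [U A w = z w] onto the top eigenspace gives
   [z x = P U x + P U A y], whence
   [|z|^2 |x|^2 <= (1 + t) d^2 |x|^2 + (1 + 1/t) lam^2 |y|^2] for all [t > 0].
   If [|z|] were close to [1], the first inequality would force [y] to be
   small compared with [x] and the second [x] small compared with [y]; made
   quantitative, this bounds [|z|^2] by [1 - delta(lam, d)]. *)

From mathcomp Require Import all_boot all_order all_algebra.
From mathcomp Require Import complex reals.
From mathcomp Require Import ring lra.
Set Implicit Arguments. Unset Strict Implicit. Unset Printing Implicit Defensive.
Import Order.TTheory GRing.Theory Num.Theory.
Local Open Scope complex_scope.
Local Open Scope ring_scope.

Section InnerProduct.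
Variable R : realType.
Local Notation C := R[i].

Definition ip n (u v : 'cV[C]_n) : C := (adjmx u *m v) 0 0.

Definition sqnorm n (v : 'cV[C]_n) : R := complex.Re (ip v v).

Lemma adjmxE m n (M : 'M[C]_(m, n)) i j : adjmx M i j = (M j i)^*.
Proof. by rewrite !mxE. Qed.

Lemma adjmx_trC m n (M : 'M[C]_(m, n)) : adjmx M = map_mx Num.conj M^T.
Proof. by apply/matrixP => i j; rewrite !mxE. Qed.

Lemma adjmxM m n p (A : 'M[C]_(m, n)) (B : 'M[C]_(n, p)) :
  adjmx (A *m B) = adjmx B *m adjmx A.
Proof. by rewrite /adjmx map_mxM trmx_mul. Qed.

Lemma adjmxK m n (A : 'M[C]_(m, n)) : adjmx (adjmx A) = A.
Proof. by apply/matrixP => i j; rewrite !adjmxE conjCK. Qed.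

Lemma ipE n (u v : 'cV[C]_n) : ip u v = \sum_i (u i 0)^* * v i 0.
Proof. by rewrite /ip mxE; apply: eq_bigr => i _; rewrite adjmxE. Qed.

Lemma ip_adjmx n (M : 'M[C]_n) u v : ip (M *m u) v = ip u (adjmx M *m v).
Proof. by rewrite /ip adjmxM mulmxA. Qed.

Lemma ipC n (u v : 'cV[C]_n) : ip v u = (ip u v)^*.
Proof.
rewrite !ipE rmorph_sum; apply: eq_bigr => i _.
by rewrite rmorphM /= conjCK mulrC.
Qed.

Lemma ipDl n (u v w : 'cV[C]_n) : ip (u + v) w = ip u w + ip v w.
Proof. by rewrite !ipE -big_split; apply: eq_bigr => i _; rewrite mxE rmorphD mulrDl. Qed.

Lemma ipDr n (u v w : 'cV[C]_n) : ip u (v + w) = ip u v + ip u w.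
Proof. by rewrite ipC ipDl rmorphD /= -!ipC. Qed.

Lemma ipZl n a (u v : 'cV[C]_n) : ip (a *: u) v = a^* * ip u v.
Proof. by rewrite !ipE mulr_sumr; apply: eq_bigr => i _; rewrite mxE rmorphM mulrA. Qed.

Lemma ipZr n a (u v : 'cV[C]_n) : ip u (a *: v) = a * ip u v.
Proof. by rewrite ipC ipZl rmorphM /= conjCK -ipC. Qed.

Lemma ipNl n (u v : 'cV[C]_n) : ip (- u) v = - ip u v.
Proof. by rewrite -scaleN1r ipZl rmorphN1 mulN1r. Qed.

Lemma ipNr n (u v : 'cV[C]_n) : ip u (- v) = - ip u v.
Proof. by rewrite -scaleN1r ipZr mulN1r. Qed.

Lemma ip0r n (u : 'cV[C]_n) : ip u 0 = 0.
Proof. by rewrite -(scale0r 0) ipZr mul0r. Qed.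

Lemma ip_self_sum n (v : 'cV[C]_n) : ip v v = \sum_i `|v i 0| ^+ 2.
Proof. by rewrite ipE; apply: eq_bigr => i _; rewrite normCKC. Qed.

Lemma ip_ge0 n (v : 'cV[C]_n) : 0 <= ip v v.
Proof. by rewrite ip_self_sum; apply: sumr_ge0 => i _; rewrite exprn_ge0. Qed.

Lemma ip_eq0 n (v : 'cV[C]_n) : (ip v v == 0) = (v == 0).
Proof.
apply/idP/eqP => [|->]; last by rewrite ip0r.
rewrite ip_self_sum psumr_eq0 => [/allP v0|i _]; last by rewrite exprn_ge0.
apply/matrixP => i j; rewrite ord1 mxE.
by have := v0 i (mem_index_enum _); rewrite expf_eq0 /= normr_eq0 => /eqP.
Qed.

Lemma ge0_RRe (x : C) : 0 <= x -> x = (complex.Re x)%:C.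
Proof. by move=> /ger0_real /RRe_real ->. Qed.

Lemma sqnormE n (v : 'cV[C]_n) : (sqnorm v)%:C = ip v v.
Proof. by rewrite [RHS]ge0_RRe ?ip_ge0. Qed.

Lemma sqnorm_ge0 n (v : 'cV[C]_n) : 0 <= sqnorm v.
Proof. by rewrite -lecR sqnormE ip_ge0. Qed.

Lemma ip_pythagoras n (u v : 'cV[C]_n) :
  ip u v = 0 -> ip (u + v) (u + v) = ip u u + ip v v.
Proof.
move=> uv0; have vu0 : ip v u = 0 by rewrite ipC uv0 conjC0.
by rewrite !ipDl !ipDr uv0 vu0 addr0 add0r.
Qed.

Lemma ipZZ n a (v : 'cV[C]_n) : ip (a *: v) (a *: v) = `|a| ^+ 2 * ip v v.
Proof. by rewrite ipZl ipZr mulrA normCKC. Qed.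

(* The weight [t] replaces the optimal [|v| / |u|], so no square roots
   are needed. *)
Lemma ip_addD_le n (t : R) (u v : 'cV[C]_n) : 0 < t ->
  ip (u + v) (u + v) <= (1 + t)%:C * ip u u + (1 + t^-1)%:C * ip v v.
Proof.
move=> t_gt0; rewrite -subr_ge0.
have tC_neq0 : t%:C != 0 by rewrite eq_complex /= negb_and gt_eqF.
have -> : (1 + t)%:C * ip u u + (1 + t^-1)%:C * ip v v - ip (u + v) (u + v)
          = (t^-1)%:C * ip (t%:C *: u - v) (t%:C *: u - v).
  have tC_real : (t%:C)^* = t%:C := conjc_real t.
  rewrite !ipDl !ipDr !ipNl !ipNr !ipZl !ipZr tC_real opprK.
  rewrite [(1 + t)%:C]rmorphD [(1 + t^-1)%:C]rmorphD rmorph1 fmorphV /=.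
  by field.
by rewrite mulr_ge0 ?ip_ge0 // lecR invr_ge0 ltW.
Qed.

Lemma unitary_ip n (U : 'M[C]_n) v : unitary_op U -> ip (U *m v) (U *m v) = ip v v.
Proof. by move=> /mulmx1C UU; rewrite ip_adjmx mulmxA UU mul1mx. Qed.

Lemma vnorm_le_sq n (u v : 'cV[C]_n) (c : R) : 0 <= c ->
  vnorm u <= c%:C * vnorm v -> ip u u <= (c ^+ 2)%:C * ip v v.
Proof.
rewrite /vnorm -!ip_self_sum => c0 le_uv.
have : sqrtC (ip u u) ^+ 2 <= (c%:C * sqrtC (ip v v)) ^+ 2.
  by rewrite ler_pXn2r ?nnegrE ?sqrtC_ge0 ?ip_ge0 // mulr_ge0 ?lecR ?sqrtC_ge0 ?ip_ge0.
by rewrite !sqrtCK exprMn sqrtCK rmorphXn.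
Qed.

End InnerProduct.

Section OrthProj.
Variables (R : realType) (n : nat) (P : 'M[R[i]]_n).
Hypotheses (P_herm : hermitian_op P) (P_idem : P *m P = P).

Lemma orth_proj_ortho u v : ip (P *m u) (v - P *m v) = 0.
Proof. by rewrite ip_adjmx P_herm mulmxBr mulmxA P_idem subrr ip0r. Qed.

Lemma orth_proj_contract u : ip (P *m u) (P *m u) <= ip u u.
Proof.
have -> : ip u u = ip (P *m u + (u - P *m u)) (P *m u + (u - P *m u)).
  by rewrite subrKC.
by rewrite ip_pythagoras ?orth_proj_ortho // lerDl ip_ge0.
Qed.

End OrthProj.

Section NormalSpectral.
Variables (R : realType) (n : nat) (A : 'M[R[i]]_n).
Hypothesis A_normal : A \is normalmx.
Local Notation V := (spectralmx A).
Local Notation D := (spectral_diag A).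

Definition spectral_vec (i : 'I_n) : 'cV[R[i]]_n := adjmx V *m delta_mx i 0.

Lemma spectral_mulmxC : V *m adjmx V = 1%:M.
Proof. by rewrite adjmx_trC; apply/unitarymxP/spectral_unitarymx. Qed.

Lemma spectral_mulCmx : adjmx V *m V = 1%:M.
Proof. exact/mulmx1C/spectral_mulmxC. Qed.

Lemma spectral_decomp : A = adjmx V *m diag_mx D *m V.
Proof.
rewrite adjmx_trC -invmx_unitary ?spectral_unitarymx //.
exact/orthomx_spectralP.
Qed.

Lemma spectral_vecP i : A *m spectral_vec i = D 0 i *: spectral_vec i.
Proof.
rewrite {1}spectral_decomp /spectral_vec -!mulmxA (mulmxA V) spectral_mulmxC.
rewrite mul1mx scalemxAr; congr (_ *m _); apply/matrixP => a b.
by rewrite mul_diag_mx !mxE; case: eqP => [->|]; rewrite ?mulr1 ?mulr0.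
Qed.

Lemma ip_spectral_vec i y : ip (spectral_vec i) y = (V *m y) i 0.
Proof.
rewrite /ip /spectral_vec adjmxM adjmxK -mulmxA.
rewrite [LHS]mxE (bigD1 i) //= big1 => [|j ji]; rewrite !mxE ?eqxx.
  by rewrite rmorph1 mul1r addr0.
by rewrite (negPf ji) rmorph0 mul0r.
Qed.

Lemma spectral_vec_neq0 i : spectral_vec i != 0.
Proof.
apply/eqP => /(congr1 (mulmx V)).
rewrite /spectral_vec mulmxA spectral_mulmxC mul1mx mulmx0 => /matrixP/(_ i 0).
by rewrite !mxE !eqxx => /eqP; rewrite oner_eq0.
Qed.

Lemma normal_ip_le (c : R) y : 0 <= c ->
    (forall i, (V *m y) i 0 != 0 -> `|D 0 i| <= c%:C) ->
  ip (A *m y) (A *m y) <= (c ^+ 2)%:C * ip y y.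
Proof.
move=> c0 Dy_le; set y' := V *m y.
have -> : ip y y = ip y' y' by rewrite ip_adjmx mulmxA spectral_mulCmx mul1mx.
have -> : ip (A *m y) (A *m y) = ip (diag_mx D *m y') (diag_mx D *m y').
  by rewrite {1 2}spectral_decomp -!mulmxA ip_adjmx adjmxK (mulmxA V) spectral_mulmxC mul1mx.
rewrite !ipE mulr_sumr; apply: ler_sum => i _.
rewrite mul_diag_mx mxE -!normCKC normrM exprMn.
have [->|/Dy_le Di_le] := eqVneq (y' i 0) 0; first by rewrite normr0 expr0n !mulr0.
apply: ler_wpM2r; first exact: exprn_ge0.
by rewrite rmorphXn /=; apply: lerXn2r; rewrite ?nnegrE ?normr_ge0 ?ler0c.
Qed.

End NormalSpectral.

Lemma hermitian_op_normalmx (R : realType) n (A : 'M[R[i]]_n) :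
  hermitian_op A -> A \is normalmx.
Proof. by move=> A_herm; apply/normalmxP; rewrite -adjmx_trC A_herm. Qed.

Lemma hermitian_ip_le_off_eigenspace (R : realType) n (A P : 'M[R[i]]_n) (lam : R) y :
    hermitian_op A -> 0 <= lam ->
    (forall mu, is_eigenvalue A mu -> mu != 1 -> `|mu| <= lam%:C) ->
    orth_proj_onto P (eigenspace_pred A 1) -> P *m y = 0 ->
  ip (A *m y) (A *m y) <= (lam ^+ 2)%:C * ip y y.
Proof.
move=> /hermitian_op_normalmx A_normal lam0 eig_le [P_herm _ P_onto] Py0.
apply: normal_ip_le => // i; rewrite -ip_spectral_vec.
have [D1|D_neq1] := eqVneq (spectral_diag A 0 i) 1.
  have Pe : P *m spectral_vec A i = spectral_vec A i.
    by apply/P_onto; rewrite /eigenspace_pred spectral_vecP // D1.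
  by rewrite -Pe ip_adjmx P_herm Py0 ip0r eqxx.
move=> _; apply: eig_le D_neq1.
by exists (spectral_vec A i); rewrite ?spectral_vec_neq0 ?spectral_vecP.
Qed.

Section RadiusBound.
Variable R : realFieldType.

Definition contraction_gap (c l K : R) : R := ((1 - c) * (1 - l)) ^+ 2 / (4 * (K + 1)).

Lemma contraction_gap_gt0 (c l K : R) : c < 1 -> l < 1 -> 0 < K -> 0 < contraction_gap c l K.
Proof.
move=> c1 l1 K0; rewrite /contraction_gap divr_gt0 ?exprn_gt0 ?mulr_gt0 //; lra.
Qed.

Lemma contraction_gap_le1 (c l K : R) :
  0 <= c < 1 -> 0 <= l < 1 -> 0 < K -> contraction_gap c l K <= 1.
Proof.
move=> /andP[c0 c1] /andP[l0 l1] K0.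
have p0 : 0 <= (1 - c) * (1 - l) by apply: mulr_ge0; lra.
have p1 : (1 - c) * (1 - l) <= 1 by rewrite -[1 in X in _ <= X]mulr1 ler_pM //; lra.
rewrite /contraction_gap ler_pdivrMr ?mul1r; last lra.
apply: (le_trans (_ : _ <= 1)); first by rewrite expr_le1.
lra.
Qed.

(* Multiplying [(s - c) X <= K Y] and [(s - l) Y <= (1 - s) X] gives
   [(s - m)^2 <= K (1 - s)] for [m := 1 - (1 - c) (1 - l)], which is at least
   [c] and [l]; this keeps [s] away from [1]. *)
Lemma le_one_sub_contraction_gap (c l K X Y s : R) :
    0 <= c < 1 -> 0 <= l < 1 -> 0 < K ->
    0 <= X -> 0 <= Y -> 0 < X + Y ->
    s * X <= c * X + K * Y -> s * (X + Y) <= X + l * Y ->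
  s <= 1 - contraction_gap c l K.
Proof.
move=> /andP[c0 c1] /andP[l0 l1] K0 X0 Y0 XY0 sX sXY.
set m := 1 - (1 - c) * (1 - l).
have mc : c <= m by rewrite /m; nra.
have ml : l <= m by rewrite /m; nra.
have m1 : m < 1 by rewrite /m; nra.
have gapE : contraction_gap c l K * (4 * (K + 1)) = (1 - m) ^+ 2.
  rewrite /contraction_gap mulfVK; first by rewrite /m; ring.
  by rewrite gt_eqF //; lra.
have gap_gt0 := contraction_gap_gt0 c1 l1 K0.
rewrite leNgt; apply/negP => s_gt.
have gap_le : contraction_gap c l K <= (1 - m) / 2.
  have : (1 - m) ^+ 2 <= 1 - m by rewrite expr2 ler_piMl //; lra.
  have := mulr_ge0 (ltW gap_gt0) (ltW K0).
  lra.
have sm : (1 - m) / 2 < s - m by lra.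
have sm_gt : m < s by lra.
have sc_le : (s - c) * X <= K * Y by lra.
have sl_le : (s - l) * Y <= (1 - s) * X by lra.
have X_gt0 : 0 < X.
  rewrite lt_def X0 andbT; apply: contraTneq sl_le => X_eq0.
  by rewrite X_eq0 mulr0 -ltNge mulr_gt0 //; lra.
have Y_gt0 : 0 < Y.
  rewrite lt_def Y0 andbT; apply: contraTneq sc_le => Y_eq0.
  by rewrite Y_eq0 mulr0 -ltNge mulr_gt0 //; lra.
have prod_le : (s - l) * (s - c) <= K * (1 - s).
  rewrite -(ler_pM2r (mulr_gt0 X_gt0 Y_gt0)).
  have := ler_pM (mulr_ge0 _ Y0) (mulr_ge0 _ X0) sl_le sc_le; rewrite !subr_ge0.
  by move=> /(_ (ltW (le_lt_trans ml sm_gt)) (ltW (le_lt_trans mc sm_gt))); lra.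
have sq_le : (s - m) ^+ 2 <= (s - l) * (s - c) by rewrite expr2 ler_pM //; lra.
nra.
Qed.

(* [t] is the weight in [|u + v|^2 <= (1 + t) |u|^2 + (1 + 1/t) |v|^2]; it
   is chosen so that [(1 + t) d^2 < 1]. *)
Definition radius_bound (lam d : R) : R :=
  let t := (1 - d ^+ 2) / 2 in
  1 - contraction_gap ((1 + t) * d ^+ 2) (lam ^+ 2) (1 + t^-1) / 2.

Section Weight.
Variable d : R.
Hypothesis d01 : 0 <= d < 1.
Let t := (1 - d ^+ 2) / 2.

Let t_gt0 : 0 < t.
Proof. by rewrite /t divr_gt0 // subr_gt0 expr_lt1 //; case/andP: d01. Qed.

Let K_gt0 : 0 < 1 + t^-1.
Proof. by rewrite ltr_wpDr ?invr_ge0 ?ltW. Qed.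

Let weight_lt1 : 0 <= (1 + t) * d ^+ 2 < 1.
Proof.
case/andP: d01 => d0 d1; have d2 : d ^+ 2 < 1 by rewrite expr_lt1.
rewrite mulr_ge0 ?exprn_ge0 ?addr_ge0 ?(ltW t_gt0) //=.
have -> : (1 + t) * d ^+ 2 = 1 - (1 - d ^+ 2) * (2 - d ^+ 2) / 2 by rewrite /t; field.
by rewrite gtrDl oppr_lt0 divr_gt0 ?mulr_gt0 //; lra.
Qed.

Lemma radius_bound_lt1 (lam : R) : 0 <= lam < 1 -> radius_bound lam d < 1.
Proof.
case/andP=> lam0 lam1; have lam2 : lam ^+ 2 < 1 by rewrite expr_lt1.
have := contraction_gap_gt0 (proj2 (andP weight_lt1)) lam2 K_gt0.
by rewrite /radius_bound -/t; lra.
Qed.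

Lemma radius_bound_ge0 (lam : R) : 0 <= lam < 1 -> 0 <= radius_bound lam d.
Proof.
case/andP=> lam0 lam1.
have lam2 : 0 <= lam ^+ 2 < 1 by rewrite exprn_ge0 ?expr_lt1.
have := contraction_gap_le1 weight_lt1 lam2 K_gt0.
by rewrite /radius_bound -/t; lra.
Qed.

Lemma le_radius_bound (lam r X Y : R) :
    0 <= lam < 1 -> 0 <= r -> 0 <= X -> 0 <= Y -> 0 < X + Y ->
    r ^+ 2 * (X + Y) <= X + lam ^+ 2 * Y ->
    (forall t, 0 < t -> r ^+ 2 * X <= (1 + t) * (d ^+ 2 * X) + (1 + t^-1) * (lam ^+ 2 * Y)) ->
  r <= radius_bound lam d.
Proof.
move=> /andP[lam0 lam1] r0 X0 Y0 XY0 total maxpart.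
have lam2 : 0 <= lam ^+ 2 < 1 by rewrite exprn_ge0 ?expr_lt1.
have sX : r ^+ 2 * X <= (1 + t) * d ^+ 2 * X + (1 + t^-1) * Y.
  apply: (le_trans (maxpart t t_gt0)); rewrite mulrA lerD2l.
  apply: ler_wpM2l; first exact: ltW.
  by rewrite -[leRHS]mul1r; apply: ler_wpM2r => //; case/andP: lam2 => _ /ltW.
have := le_one_sub_contraction_gap weight_lt1 lam2 K_gt0 X0 Y0 XY0 sX total.
have := contraction_gap_le1 weight_lt1 lam2 K_gt0.
rewrite /radius_bound -/t; set g := contraction_gap _ _ _ => g1 r2_le.
rewrite -(ler_pXn2r (_ : 0 < 2)%N) ?nnegrE //; last lra.
by apply: (le_trans r2_le); nra.
Qed.

End Weight.

End RadiusBound.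

Section Eigenpair.
Variables (R : realType) (n : nat) (U A P : 'M[R[i]]_n) (lam d : R).
Hypotheses (U_unitary : unitary_op U) (A_herm : hermitian_op A).
Hypotheses (lam_ge0 : 0 <= lam) (d_ge0 : 0 <= d).
Hypothesis eig_le : forall mu, is_eigenvalue A mu -> mu != 1 -> `|mu| <= lam%:C.
Hypothesis P_proj : orth_proj_onto P (eigenspace_pred A 1).
Hypothesis PU_le : forall v, eigenspace_pred A 1 v -> vnorm (P *m (U *m v)) <= d%:C * vnorm v.
Variables (z : R[i]) (w : 'cV[R[i]]_n).
Hypothesis w_eig : U *m A *m w = z *: w.

Local Notation x := (P *m w).
Local Notation y := (w - P *m w).

Let P_herm : hermitian_op P. Proof. by case: P_proj. Qed.
Let P_idem : P *m P = P. Proof. by case: P_proj. Qed.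

Let x_eig : eigenspace_pred A 1 x.
Proof. by case: P_proj => _ _ ->; rewrite mulmxA P_idem. Qed.

Let Ax : A *m x = x.
Proof. by rewrite x_eig scale1r. Qed.

Let Py : P *m y = 0.
Proof. by rewrite mulmxBr mulmxA P_idem subrr. Qed.

Let Aw : A *m w = x + A *m y.
Proof. by rewrite mulmxBr Ax addrC subrK. Qed.

Let x_Ay : ip x (A *m y) = 0.
Proof. by rewrite -A_herm -ip_adjmx Ax orth_proj_ortho. Qed.

Let Ay_le : ip (A *m y) (A *m y) <= (lam ^+ 2)%:C * ip y y.
Proof. exact: (hermitian_ip_le_off_eigenspace A_herm lam_ge0 eig_le P_proj Py). Qed.

Lemma eigenvector_split : ip w w = ip x x + ip y y.
Proof. by rewrite -ip_pythagoras ?orth_proj_ortho // addrC subrK. Qed.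

Lemma eigenvalue_sq_le_total :
  `|z| ^+ 2 * (ip x x + ip y y) <= ip x x + (lam ^+ 2)%:C * ip y y.
Proof.
rewrite -eigenvector_split -ipZZ -w_eig -mulmxA unitary_ip // Aw (ip_pythagoras x_Ay) lerD2l.
exact: Ay_le.
Qed.

Lemma eigenvalue_sq_le_top t : 0 < t ->
  `|z| ^+ 2 * ip x x
    <= (1 + t)%:C * ((d ^+ 2)%:C * ip x x) + (1 + t^-1)%:C * ((lam ^+ 2)%:C * ip y y).
Proof.
move=> t_gt0.
have zx : z *: x = P *m (U *m x) + P *m (U *m (A *m y)).
  by rewrite scalemxAr -w_eig -mulmxA Aw !mulmxDr.
rewrite -ipZZ zx; apply: (le_trans (ip_addD_le _ _ t_gt0)).
apply: lerD; apply: ler_wpM2l; rewrite ?ler0c ?addr_ge0 ?invr_ge0 ?(ltW t_gt0) //.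
- exact: (vnorm_le_sq d_ge0 (PU_le x_eig)).
- apply: le_trans (orth_proj_contract P_herm P_idem _) _.
  by rewrite unitary_ip // Ay_le.
Qed.

Hypotheses (lam_lt1 : lam < 1) (d_lt1 : d < 1) (w_neq0 : w != 0).

Lemma eigenvalue_norm_le : `|z| <= (radius_bound lam d)%:C.
Proof.
set r := complex.Re `|z|; have zE : `|z| = r%:C := ge0_RRe (normr_ge0 z).
have r0 : 0 <= r by rewrite -ler0c -zE.
rewrite zE lecR; apply: (@le_radius_bound _ d _ lam r (sqnorm x) (sqnorm y)).
all: rewrite ?lam_ge0 ?d_ge0 ?sqnorm_ge0 //=.
- by rewrite -ltcR rmorphD /= !sqnormE -eigenvector_split lt_def ip_ge0 ip_eq0 w_neq0.
- rewrite -lecR rmorphM rmorphXn !rmorphD /= rmorphM /= !sqnormE -zE.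
  exact: eigenvalue_sq_le_total.
- move=> t t_gt0; rewrite -lecR rmorphM rmorphXn rmorphD /=.
  rewrite [((1 + t) * _)%:C]rmorphM [((1 + t^-1) * _)%:C]rmorphM /=.
  rewrite [(d ^+ 2 * _)%:C]rmorphM [(lam ^+ 2 * _)%:C]rmorphM /= !sqnormE -zE.
  exact: eigenvalue_sq_le_top.
Qed.

End Eigenpair.

Lemma char_poly_trmx (F : fieldType) n (M : 'M[F]_n) : char_poly M^T = char_poly M.
Proof.
rewrite /char_poly -det_tr; congr (\det _).
by apply/matrixP => i j; rewrite !mxE eq_sym.
Qed.

Lemma root_char_poly_eigenvector (F : fieldType) n (M : 'M[F]_n) a :
  root (char_poly M) a -> exists2 w : 'cV[F]_n, w != 0 & M *m w = a *: w.
Proof.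
rewrite -char_poly_trmx -eigenvalue_root_char => /eigenvalueP [v v_eig v_neq0].
exists v^T; first by rewrite trmx_eq0.
by rewrite -[M]trmxK -trmx_mul v_eig linearZ.
Qed.

Lemma root_eigen_roots (R : realType) n (M : 'M[R[i]]_n) a :
  a \in eigen_roots M -> root (char_poly M) a.
Proof.
rewrite /eigen_roots; case: closed_field_poly_normal => s /= ->.
by rewrite rootZ ?root_prod_XsubC // (monicP (char_poly_monic M)) oner_eq0.
Qed.

Lemma bigmax_norm_le (T : numDomainType) (s : seq T) (c : T) :
  0 <= c -> {in s, forall a, `|a| <= c} -> \big[Num.max/0]_(a <- s) `|a| <= c.
Proof.
move=> c0 s_le; rewrite big_seq; elim/big_rec: _ => // a m /s_le a_le m_le.
by rewrite /Num.max /Order.max; case: ifP.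
Qed.

Theorem mainTheorem10 (R : realType) :
  forall lam d : R, 0 <= lam -> lam < 1 -> 0 <= d -> d < 1 ->
  exists f : R, f < 1 /\
    forall (n : nat) (U A P : 'M[R[i]]_n),
      unitary_op U -> hermitian_op A ->
      is_eigenvalue A 1 ->
      (forall mu, is_eigenvalue A mu -> mu != 1 -> `|mu| <= lam%:C) ->
      orth_proj_onto P (eigenspace_pred A 1) ->
      (forall v : 'cV[R[i]]_n, eigenspace_pred A 1 v ->
         vnorm (P *m (U *m v)) <= d%:C * vnorm v) ->
      spectral_radius (U *m A) <= f%:C.
Proof.
move=> lam d lam0 lam1 d0 d1.
have lam01 : 0 <= lam < 1 by rewrite lam0.
have d01 : 0 <= d < 1 by rewrite d0.
exists (radius_bound lam d); split; first exact: radius_bound_lt1.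
(* The bound holds whether or not [1] is actually an eigenvalue of [A]. *)
move=> n U A P U_unitary A_herm _ eig_le P_proj PU_le.
apply: bigmax_norm_le; first by rewrite ler0c radius_bound_ge0.
move=> a /root_eigen_roots /root_char_poly_eigenvector [w w_neq0 w_eig].
exact: (eigenvalue_norm_le U_unitary A_herm lam0 d0 eig_le P_proj PU_le w_eig lam1 d1 w_neq0).
Qed.
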